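(* Consider the problem of minimizing $g(\mathbf{x})+f(\mathbf{x})+h(\mathbf{y})$ subject to $\mathbf{A}\mathbf{x}+\mathbf{B}\mathbf{y}=\mathbf{0}$ (i.e. the coupling function $g$ depends on $\mathbf{x}$ only), under the standing assumptions (i)–(iv) below, and let $\{(\mathbf{x}^k,\mathbf{y}^k,\boldsymbol{\gamma}^k)\}$ be generated by the two-block linearized ADMM below with parameters satisfying $$L_x\ge L_g+\beta L_{\mathbf{A}}+6L_w^2+1,\quad L_y\ge L_w+L_w^2+3,\quad C_m=\tfrac{L_y+L_w^2}{2},\quad \beta\ge\max\left\{\frac{L_w+L_y+2}{\lambda_{\mathbf{B}^{\rm T}\mathbf{B}}},\frac{3(L_w^2+L_y^2)}{\lambda_{\mathbf{B}^{\rm T}\mathbf{B}}C_m},\frac{3L_y^2}{\lambda_{\mathbf{B}^{\rm T}\mathbf{B}}}\right\},$$ where $L_{\mathbf{A}}$ is the largest eigenvalue of $\mathbf{A}^{\rm T}\mathbf{A}$, $\lambda_{\mathbf{B}^{\rm T}\mathbf{B}}$ the smallest eigenvalue of $\mathbf{B}^{\rm T}\mathbf{B}$, and $L_w=L_g+L_h$. Then the dual sequence $\{\boldsymbol{\gamma}^k\}$ is bounded.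
   Context: Variables $\mathbf{x}\in\mathbb{R}^p$, $\mathbf{y}\in\mathbb{R}^q$; given $\mathbf{A}\in\mathbb{R}^{n\times p}$, $\mathbf{B}\in\mathbb{R}^{n\times q}$; $f$ possibly nonconvex and nonsmooth. A function $s$ is $L$-Lipschitz differentiable if $\nabla s$ is $L$-Lipschitz. Standing assumptions: (i) $h$ is $L_h$-Lipschitz differentiable; (ii) $g$ is $L_g$-Lipschitz differentiable; (iii) $g(\mathbf{x})+f(\mathbf{x})+h(\mathbf{y})$ is lower bounded on the feasible set $\{(\mathbf{x},\mathbf{y}):\mathbf{A}\mathbf{x}+\mathbf{B}\mathbf{y}=\mathbf{0}\}$ and coercive with respect to $\mathbf{y}$ over it (for any feasible sequence with $\|\mathbf{y}^k\|\to\infty$ the objective tends to $+\infty$); (iv) $\mathbf{B}$ has full column rank and $\mathrm{Im}(\mathbf{A})\subset\mathrm{Im}(\mathbf{B})$. Algorithm (parameters $L_x,L_y,\beta>0$, arbitrary initialization): $\mathbf{x}^{k+1}\in\arg\min_{\mathbf{x}}\bar f^k(\mathbf{x})$, $\mathbf{y}^{k+1}=\arg\min_{\mathbf{y}}\bar h^k(\mathbf{y})$, $\boldsymbol{\gamma}^{k+1}=\boldsymbol{\gamma}^k+\beta(\mathbf{A}\mathbf{x}^{k+1}+\mathbf{B}\mathbf{y}^{k+1})$, with $\bar f^k(\mathbf{x})=f(\mathbf{x})+\langle\boldsymbol{\gamma}^k,\mathbf{A}\mathbf{x}\rangle+\frac{L_x}{2}\|\mathbf{x}-\mathbf{x}^k\|^2+\langle\mathbf{x}-\mathbf{x}^k,\nabla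 g(\mathbf{x}^k)+\beta\mathbf{A}^{\rm T}(\mathbf{A}\mathbf{x}^k+\mathbf{B}\mathbf{y}^k)\rangle$, $\bar h^k(\mathbf{y})=\langle\boldsymbol{\gamma}^k,\mathbf{B}\mathbf{y}\rangle+\frac{L_y}{2}\|\mathbf{y}-\mathbf{y}^k\|^2+\frac{\beta}{2}\|\mathbf{A}\mathbf{x}^{k+1}+\mathbf{B}\mathbf{y}\|^2+\langle\mathbf{y}-\mathbf{y}^k,\nabla h(\mathbf{y}^k)\rangle$ (minimizers of $\bar f^k$ assumed to exist). *)

From HB Require Import structures.
From mathcomp Require Import all_boot all_order all_algebra.
From mathcomp Require Import reals.
Set Implicit Arguments. Unset Strict Implicit. Unset Printing Implicit Defensive.
Import Order.TTheory GRing.Theory Num.Theory.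
Local Open Scope ring_scope.

Section Defs.
Variable R : realType.

Definition dotv (m : nat) (u v : 'cV[R]_m) : R := \sum_(i < m) u i 0 * v i 0.
Definition normv (m : nat) (u : 'cV[R]_m) : R := Num.sqrt (dotv u u).

Definition has_gradient (m : nat) (f : 'cV[R]_m -> R) (gf : 'cV[R]_m -> 'cV[R]_m) :=
  forall x (e : R), 0 < e -> exists d : R, 0 < d /\
    forall v, normv v < d -> `|f (x + v) - f x - dotv (gf x) v| <= e * normv v.

Definition lipschitz_differentiable (m : nat) (f : 'cV[R]_m -> R)
  (gf : 'cV[R]_m -> 'cV[R]_m) (L : R) :=
  has_gradient f gf /\ forall x y, normv (gf x - gf y) <= L * normv (x - y).

Definition largest_eigenvalue (m : nat) (M : 'M[R]_m) (L : R) :=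
  eigenvalue M L /\ forall a, eigenvalue M a -> a <= L.
Definition smallest_eigenvalue (m : nat) (M : 'M[R]_m) (lam : R) :=
  eigenvalue M lam /\ forall a, eigenvalue M a -> lam <= a.

End Defs.

(* The optimality condition of the y-step expresses [B^T gam^(k+1)] through
   [gradh y^k] and [y^(k+1) - y^k].  Every dual increment
   [beta (A x^(k+1) + B y^(k+1))] lies in [Im B], on which [B^T] is bounded
   below by the smallest eigenvalue of [B^T B]; hence dual increments are
   controlled by primal ones, and the augmented Lagrangian at step [k+1] plus
   [2 |y^(k+1) - y^k|^2] is nonincreasing.  It dominates the objective at the
   feasible point [(x^(k+1), - z x^(k+1))], where [B (z x) = A x], so the
   increments are bounded and, by coercivity, so are the [y^k].  Then
   [B^T gam^k] is bounded, and so is [gam^k - gam^0], which lies in [Im B]. *)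

From HB Require Import structures.
From mathcomp Require Import all_boot all_order all_algebra.
From mathcomp Require Import all_classical all_reals all_analysis.
From mathcomp Require Import ring lra.
Import Order.TTheory GRing.Theory Num.Theory.
Import numFieldNormedType.Exports.
Set Implicit Arguments. Unset Strict Implicit. Unset Printing Implicit Defensive.
Local Open Scope ring_scope.

Section InnerProduct.
Variables (R : realType) (m : nat).
Implicit Types (a s : R) (u v w : 'cV[R]_m).

Lemma dotvC u v : dotv u v = dotv v u.
Proof. by apply: eq_bigr => i _; rewrite mulrC. Qed.

Lemma dotvDl u v w : dotv (u + v) w = dotv u w + dotv v w.
Proof. by rewrite /dotv -big_split; apply: eq_bigr => i _; rewrite !mxE mulrDl. Qed.

Lemma dotvDr u v w : dotv w (u + v) = dotv w u + dotv w v.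
Proof. by rewrite dotvC dotvDl !(dotvC w). Qed.

Lemma dotvZl a u w : dotv (a *: u) w = a * dotv u w.
Proof. by rewrite /dotv mulr_sumr; apply: eq_bigr => i _; rewrite !mxE mulrA. Qed.

Lemma dotvZr a u w : dotv w (a *: u) = a * dotv w u.
Proof. by rewrite dotvC dotvZl dotvC. Qed.

Lemma dotvNl u w : dotv (- u) w = - dotv u w.
Proof. by rewrite -scaleN1r dotvZl mulN1r. Qed.

Lemma dotvNr u w : dotv w (- u) = - dotv w u.
Proof. by rewrite -scaleN1r dotvZr mulN1r. Qed.

Lemma dotvBl u v w : dotv (u - v) w = dotv u w - dotv v w.
Proof. by rewrite dotvDl dotvNl. Qed.

Lemma dotvBr u v w : dotv w (u - v) = dotv w u - dotv w v.
Proof. by rewrite dotvDr dotvNr. Qed.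

Lemma dotv0l w : dotv 0 w = 0.
Proof. by rewrite -(scale0r 0) dotvZl mul0r. Qed.

Lemma dotvvN u : dotv (- u) (- u) = dotv u u.
Proof. by rewrite dotvNl dotvNr opprK. Qed.

Lemma dotvvD u v : dotv (u + v) (u + v) = dotv u u + 2 * dotv u v + dotv v v.
Proof. by rewrite !dotvDl !dotvDr (dotvC v u); ring. Qed.

Lemma dotvv_ge0 u : 0 <= dotv u u.
Proof. by apply: sumr_ge0 => i _; rewrite -expr2 sqr_ge0. Qed.

Lemma dotvv_eq0 u : (dotv u u == 0) = (u == 0).
Proof.
apply/idP/eqP => [|->]; last by rewrite dotv0l.
rewrite psumr_eq0 => [/allP u0|i _]; last by rewrite -expr2 sqr_ge0.
apply/matrixP => i j; rewrite (ord1 j) !mxE.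
by have /implyP/(_ isT) := u0 i (mem_index_enum i); rewrite mulf_eq0 orbb => /eqP.
Qed.

Lemma dotvv_gt0 u : u != 0 -> 0 < dotv u u.
Proof. by rewrite lt_def dotvv_eq0 dotvv_ge0 andbT. Qed.

Lemma dotv_amgm s u v : 2 * s * dotv u v <= s ^+ 2 * dotv u u + dotv v v.
Proof.
have := dotvv_ge0 (s *: u - v).
by rewrite !dotvBl !dotvBr !dotvZl !dotvZr (dotvC v u); nra.
Qed.

Lemma dotvvD_le u v : dotv (u + v) (u + v) <= 2 * dotv u u + 2 * dotv v v.
Proof. by have := dotv_amgm 1 u v; rewrite dotvvD; nra. Qed.

Lemma dotvvD3_le u v w :
  dotv (u + v + w) (u + v + w) <= 3 * dotv u u + 3 * dotv v v + 3 * dotv w w.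
Proof.
have := dotv_amgm 1 u v; have := dotv_amgm 1 u w; have := dotv_amgm 1 v w.
by rewrite !dotvDl !dotvDr (dotvC v u) (dotvC w u) (dotvC w v); nra.
Qed.

Lemma dotv_sqr_le u v : dotv u v ^+ 2 <= dotv u u * dotv v v.
Proof.
have [->|u0] := eqVneq u 0; first by rewrite !dotv0l expr0n mul0r.
have := dotvv_ge0 (dotv u v *: u - dotv u u *: v).
rewrite !dotvBl !dotvBr !dotvZl !dotvZr (dotvC v u) => H.
have := dotvv_gt0 u0; nra.
Qed.

Lemma normv_ge0 u : 0 <= normv u.
Proof. exact: sqrtr_ge0. Qed.

Lemma normv_sqr u : normv u ^+ 2 = dotv u u.
Proof. by rewrite sqr_sqrtr // dotvv_ge0. Qed.

Lemma normvZ a u : normv (a *: u) = `|a| * normv u.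
Proof. by rewrite /normv dotvZl dotvZr mulrA -expr2 sqrtrM ?sqr_ge0 // sqrtr_sqr. Qed.

Lemma dotv_le_normv u v : dotv u v <= normv u * normv v.
Proof.
apply: le_trans (ler_norm _) _.
by rewrite -sqrtr_sqr -sqrtrM ?dotvv_ge0 // ler_wsqrtr // dotv_sqr_le.
Qed.

End InnerProduct.

Lemma dotv_mulmx (R : realType) m n (M : 'M[R]_(m, n)) u v :
  dotv u (M *m v) = dotv (M^T *m u) v.
Proof.
rewrite /dotv (eq_bigr (fun i => \sum_j u i 0 * M i j * v j 0)); last first.
  by move=> i _; rewrite mxE mulr_sumr; apply: eq_bigr => j _; rewrite mulrA.
rewrite exchange_big; apply: eq_bigr => j _ /=.
by rewrite mxE mulr_suml; apply: eq_bigr => i _; rewrite !mxE (mulrC (M i j)).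
Qed.

Section Rayleigh.
Variable R : realType.

Lemma mulmx_dotv_bound m n (P : 'M[R]_(m, n)) :
  exists2 C, 0 <= C & forall z, dotv (P *m z) (P *m z) <= C * dotv z z.
Proof.
exists (\sum_(i < m) dotv (row i P)^T (row i P)^T).
  by apply: sumr_ge0 => i _; apply: dotvv_ge0.
move=> z; rewrite mulr_suml; apply: ler_sum => i _.
have -> : (P *m z) i 0 = dotv (row i P)^T z.
  by rewrite mxE; apply: eq_bigr => j _; rewrite !mxE.
by rewrite -expr2 dotv_sqr_le.
Qed.

Lemma sym_eigenvector m (M : 'M[R]_m) a : M^T = M -> eigenvalue M a ->
  exists2 d : 'cV[R]_m, M *m d = a *: d & d != 0.
Proof.
move=> MT /eigenvalueP [v vM v0]; exists v^T; last by rewrite trmx_eq0.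
by rewrite -{1}MT -trmx_mul vM linearZ.
Qed.

Lemma psd_dotv_amgm m (N : 'M[R]_m) s x y : N^T = N ->
  (forall z, 0 <= dotv z (N *m z)) ->
  2 * s * dotv x (N *m y) <= s ^+ 2 * dotv x (N *m x) + dotv y (N *m y).
Proof.
move=> NT psd; have := psd (s *: x - y).
rewrite !mulmxBr !dotvBl !dotvBr -!scalemxAr !dotvZl !dotvZr.
have -> : dotv y (N *m x) = dotv x (N *m y) by rewrite dotv_mulmx NT dotvC.
nra.
Qed.

(* [|Nx|^2 <= K <x, Nx>] by Cauchy-Schwarz for the form of [N], and
   [|x|^2 <= C |Nx|^2] by boundedness of [invmx N]. *)
Lemma psd_unit_coercive m (N : 'M[R]_m) : N^T = N ->
  (forall z, 0 <= dotv z (N *m z)) -> N \in unitmx ->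
  exists2 c, 0 < c & forall x, c * dotv x x <= dotv x (N *m x).
Proof.
move=> NT psd Nu.
have [Ci Ci0 HCi] := mulmx_dotv_bound (invmx N).
have [CN CN0 HCN] := mulmx_dotv_bound N.
pose K := (1 + CN) / 2.
have K0 : 0 < K by rewrite /K; lra.
have NxNx x : dotv (N *m x) (N *m x) <= K * dotv x (N *m x).
  have := psd_dotv_amgm K x (N *m x) NT psd.
  have -> : dotv x (N *m (N *m x)) = dotv (N *m x) (N *m x) by rewrite dotv_mulmx NT.
  have := dotv_amgm 1 (N *m x) (N *m (N *m x)); have := HCN (N *m x).
  rewrite -(ler_pM2l K0) /K; nra.
exists (Ci * K + 1)^-1; first by rewrite invr_gt0; nra.
move=> x; rewrite ler_pdivrMl; last by nra.
have := HCi (N *m x); rewrite mulKmx // => Hx.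
have := NxNx x; have := psd x; have := dotvv_ge0 x; nra.
Qed.

(* [mu] is the largest lower bound of the Rayleigh quotient; were it not an
   eigenvalue, [M - mu] would be positive definite and [mu] not the largest. *)
Lemma rayleigh_min m (M : 'M[R]_m) a : M^T = M -> eigenvalue M a ->
  exists2 mu, eigenvalue M mu & forall d, mu * dotv d d <= dotv d (M *m d).
Proof.
move=> MT /(sym_eigenvector MT) [d0 Md0 d00].
pose S : set R := fun r => forall d, r * dotv d d <= dotv d (M *m d).
have [C C0 HC] := mulmx_dotv_bound M.
have S0 : S (- ((1 + C) / 2)).
  move=> d; have := dotv_amgm (-1) d (M *m d); have := HC d.
  have := dotvv_ge0 d; nra.
have Sa r : S r -> r <= a.
  by move=> /(_ d0); rewrite Md0 dotvZr ler_pM2r // dotvv_gt0.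
have supS : has_sup S by split; [exists (- ((1 + C) / 2)) | exists a => r /Sa].
pose mu := sup S.
have Smu : S mu.
  move=> d; apply/ler_addgt0Pr => e e0; rewrite -lerBlDr.
  have dd := dotvv_ge0 d.
  have [r Sr ltr] := sup_adherent (divr_gt0 e0 (ltr_pwDr ltr01 dd)) supS.
  have : mu - r < e / (dotv d d + 1) by rewrite -/mu in ltr; lra.
  rewrite ltr_pdivlMr; last by lra.
  have := Sr d; nra.
exists mu => //.
case: (boolP (M - mu%:M \in unitmx)) => [Nu|]; last first.
  rewrite unitmxE unitfE negbK => /det0P [v v0 vN]; apply/eigenvalueP.
  by exists v => //; apply/eqP; rewrite -subr_eq0 -mul_mx_scalar -mulmxBr vN.
pose N := M - mu%:M.
have Nd d : dotv d (N *m d) = dotv d (M *m d) - mu * dotv d d.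
  by rewrite mulmxBl mul_scalar_mx dotvBr dotvZr.
have NT : N^T = N by rewrite linearB /= MT tr_scalar_mx.
have N_psd z : 0 <= dotv z (N *m z) by rewrite Nd subr_ge0.
have [c c0 Hc] := psd_unit_coercive NT N_psd Nu.
have : mu + c <= mu by apply: sup_upper_bound => // d; have := Hc d; rewrite Nd; lra.
lra.
Qed.

Lemma smallest_eigenvalue_dotv m (M : 'M[R]_m) lam : M^T = M ->
  smallest_eigenvalue M lam -> forall d, lam * dotv d d <= dotv d (M *m d).
Proof.
move=> MT [/(rayleigh_min MT) [mu /= emu Hmu] lam_min] d.
by apply: le_trans (Hmu d); rewrite ler_wpM2r ?dotvv_ge0 ?lam_min.
Qed.

Lemma largest_eigenvalue_dotv m (M : 'M[R]_m) L : M^T = M ->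
  largest_eigenvalue M L -> forall d, dotv d (M *m d) <= L * dotv d d.
Proof.
move=> MT [eL Lmax] d.
have eigN a : eigenvalue (- M) (- a) = eigenvalue M a.
  apply/eigenvalueP/eigenvalueP => -[v vM v0]; exists v => //.
    by apply: oppr_inj; rewrite -scaleNr -vM mulmxN.
  by rewrite mulmxN scaleNr vM.
have NT : (- M)^T = - M by rewrite linearN /= MT.
have [mu emu Hmu] := rayleigh_min NT (etrans (eigN L) eL).
have muL : - mu <= L by apply: Lmax; rewrite -eigN opprK.
have := Hmu d; rewrite mulNmx dotvNr; have := dotvv_ge0 d; nra.
Qed.

Lemma gram_sym n m (A : 'M[R]_(n, m)) : (A^T *m A)^T = A^T *m A.
Proof. by rewrite trmx_mul trmxK. Qed.

Lemma dotv_gram n m (A : 'M[R]_(n, m)) d :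
  dotv (A *m d) (A *m d) = dotv d ((A^T *m A) *m d).
Proof. by rewrite -mulmxA [RHS]dotv_mulmx trmxK. Qed.

Lemma largest_eigenvalue_gram n m (A : 'M[R]_(n, m)) L :
  largest_eigenvalue (A^T *m A) L -> forall d, dotv (A *m d) (A *m d) <= L * dotv d d.
Proof. by move=> HL d; rewrite dotv_gram largest_eigenvalue_dotv ?gram_sym. Qed.

Lemma smallest_eigenvalue_gram n m (A : 'M[R]_(n, m)) lam :
  smallest_eigenvalue (A^T *m A) lam ->
  forall d, lam * dotv d d <= dotv (A *m d) (A *m d).
Proof. by move=> Hlam d; rewrite dotv_gram smallest_eigenvalue_dotv ?gram_sym. Qed.

Lemma smallest_eigenvalue_gram_gt0 n m (B : 'M[R]_(n, m)) lam : \rank B = m ->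
  smallest_eigenvalue (B^T *m B) lam -> 0 < lam.
Proof.
move=> rkB [/(sym_eigenvector (gram_sym B)) [d Bd d0] _].
have Bd0 : B *m d != 0.
  apply: contra d0 => /eqP Bd0; rewrite -trmx_eq0; apply/eqP.
  have rf : row_free B^T by rewrite /row_free mxrank_tr rkB.
  by apply: (row_free_inj rf); rewrite mul0mx -trmx_mul Bd0 trmx0.
by move: (dotvv_gt0 Bd0); rewrite dotv_gram Bd dotvZr pmulr_lgt0 // dotvv_gt0.
Qed.

Lemma gram_range_ge n m (B : 'M[R]_(n, m)) lam : 0 <= lam ->
  (forall d, lam * dotv d d <= dotv (B *m d) (B *m d)) ->
  forall d, lam * dotv (B *m d) (B *m d) <= dotv (B^T *m (B *m d)) (B^T *m (B *m d)).
Proof.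
move=> lam0 HB d; have := dotv_amgm lam d (B^T *m (B *m d)).
rewrite (dotv_mulmx B^T) trmxK; have := ler_wpM2l lam0 (HB d); nra.
Qed.

End Rayleigh.

Section Descent.
Variables (R : realType) (m : nat).
Local Open Scope classical_set_scope.
Implicit Types (F : 'cV[R]_m -> R) (gF : 'cV[R]_m -> 'cV[R]_m) (y d : 'cV[R]_m) (t : R).

Lemma has_gradient_is_derive F gF y d t : has_gradient F gF ->
  is_derive t 1 (fun s => F (y + s *: d)) (dotv (gF (y + t *: d)) d).
Proof.
move=> HF; set x := y + t *: d.
have Fh h : F (y + (h *: 1 + t) *: d) = F (x + h *: d).
  by rewrite [h *: 1]mulr1 scalerDl addrA (addrAC y).
suff Hcvg : (fun h => h^-1 *: (F (x + h *: d) - F x)) @ 0^' --> dotv (gF x) d.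
  apply: DeriveDef; last apply: cvg_lim => //.
    by apply/cvg_ex; exists (dotv (gF x) d); under eq_fun do rewrite /= Fh.
  by under eq_fun do rewrite /= Fh.
apply/cvgrPdist_le => eps eps0.
have nd1 : 0 < normv d + 1 by have := normv_ge0 d; lra.
have [del [del0 Hdel]] := HF x _ (divr_gt0 eps0 nd1).
near=> h.
have h0 : h != 0 by near: h; exact: nbhs_dnbhs_neq.
have hdel : `|h| * (normv d + 1) < del.
  rewrite -ltr_pdivlMr //; near: h; apply: dnbhs0_lt; exact: divr_gt0.
have hd : normv (h *: d) < del by rewrite normvZ; have := normv_ge0 d; nra.
have := Hdel _ hd; rewrite normvZ dotvZr.
set G := F (x + h *: d) - F x - h * dotv (gF x) d => HG.
have -> : dotv (gF x) d - h^-1 *: (F (x + h *: d) - F x) = - (h^-1 * G).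
  by rewrite /G /GRing.scale /=; field.
rewrite normrN normrM normfV ler_pdivrMl ?normr_gt0 //; apply: le_trans HG _.
have : (normv d + 1)^-1 * normv d <= 1 by rewrite mulrC ler_pdivrMr //; lra.
have := mulr_ge0 (ltW eps0) (normr_ge0 h); nra.
Unshelve. all: by end_near.
Qed.

Lemma descent_lemma F gF L : lipschitz_differentiable F gF L ->
  forall y d, F (y + d) <= F y + dotv (gF y) d + L / 2 * dotv d d.
Proof.
move=> [HF HL] y d.
pose c := dotv (gF y) d; pose k := L / 2 * dotv d d.
pose psi := (fun s => F (y + s *: d)) - c \*: (@id R) - k \*: (@id R) ^+ 2 : R -> R.
pose dpsi t := dotv (gF (y + t *: d)) d - c - k * (2 * t).
have psi_der t : is_derive t 1 psi (dpsi t).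
  have Hphi := has_gradient_is_derive y d t HF; apply: is_derive_eq.
  by rewrite /dpsi expr1 [c%:A]mulr1 [(2 * t)%:A]mulr1.
have dpsi_le0 t : 0 <= t -> dpsi t <= 0.
  move=> t0; rewrite /dpsi /c /k -dotvBl.
  have := dotv_le_normv (gF (y + t *: d) - gF y) d.
  have := HL (y + t *: d) y; rewrite (addrC y) addrK normvZ ger0_norm //.
  have := normv_ge0 d; have := normv_ge0 (gF (y + t *: d) - gF y).
  rewrite -normv_sqr; nra.
have psi_cont : {within `[0, 1], continuous psi}.
  by apply: derivable_within_continuous => t _; exact: ex_derive.
have [t0 t0_in psi10] := MVT_segment ler01 (fun t _ => psi_der t) psi_cont.
move: t0_in; rewrite in_itv /= => /andP[t00 _].
rewrite subr0 mulr1 in psi10; have := dpsi_le0 t0 t00.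
rewrite -psi10 /psi !fctE /= scale1r scale0r addr0 expr1n expr0n /=.
by rewrite !scaler0 ![_%:A]mulr1 /c /k; lra.
Qed.

Lemma lipschitz_differentiable_ge0 F gF L d : d != 0 ->
  lipschitz_differentiable F gF L -> 0 <= L.
Proof.
move=> d0 [_ HL]; have := HL d 0; rewrite subr0.
have nd : 0 < normv d by rewrite sqrtr_gt0 dotvv_gt0.
have := normv_ge0 (gF d - gF 0); nra.
Qed.

Lemma lipschitz_sqr F gF L x y : lipschitz_differentiable F gF L ->
  dotv (gF x - gF y) (gF x - gF y) <= L ^+ 2 * dotv (x - y) (x - y).
Proof.
move=> [_ HL]; rewrite -!normv_sqr -exprMn.
rewrite ler_sqr ?nnegrE ?normv_ge0 ?HL //.
exact: le_trans (normv_ge0 _) (HL x y).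
Qed.

End Descent.

Lemma min_quadratic_stationary (R : realType) m (phi Q : 'cV[R]_m -> R) y1 G :
  (forall e, phi (y1 + e) = phi y1 + dotv G e + Q e) ->
  (forall s e, Q (s *: e) = s ^+ 2 * Q e) ->
  (forall y, phi y1 <= phi y) -> G = 0.
Proof.
move=> phiE QZ phi_min; apply/eqP; rewrite -dotvv_eq0 eq_le dotvv_ge0 andbT.
apply/ler_addgt0Pr => e e0; rewrite add0r.
pose s := e / (`|Q G| + 1).
have s0 : 0 < s by rewrite divr_gt0 // ltr_pwDr.
have sQ : s * `|Q G| <= e by rewrite mulrAC ler_pdivrMr ?ltr_pwDr //; nra.
have := phi_min (y1 + (- s) *: G); rewrite phiE dotvZr QZ sqrrN => H.
have : s * dotv G G <= s * (s * Q G) by nra.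
rewrite ler_pM2l // => /le_trans; apply; apply: le_trans sQ.
by rewrite ler_pM2l ?ler_norm.
Qed.

Section LinearizedADMMSteps.
Variables (R : realType) (p q n : nat) (A : 'M[R]_(n, p)) (B : 'M[R]_(n, q)).
Variables (f g : 'cV[R]_p -> R) (h : 'cV[R]_q -> R).
Variables (gradg : 'cV[R]_p -> 'cV[R]_p) (gradh : 'cV[R]_q -> 'cV[R]_q).
Variables (Lg Lh Lx Ly beta : R).

Definition auglag x y gam := g x + f x + h y + dotv gam (A *m x + B *m y)
  + beta / 2 * dotv (A *m x + B *m y) (A *m x + B *m y).

(* [xobj] and [yobj] are the objectives [\bar f^k] and [\bar h^k] of the
   linearized subproblems. *)
Definition xobj gam x0 y0 x := f x + dotv gam (A *m x)
  + Lx / 2 * dotv (x - x0) (x - x0)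
  + dotv (x - x0) (gradg x0 + beta *: (A^T *m (A *m x0 + B *m y0))).

Definition yobj gam x1 y0 y := dotv gam (B *m y)
  + Ly / 2 * dotv (y - y0) (y - y0)
  + beta / 2 * dotv (A *m x1 + B *m y) (A *m x1 + B *m y)
  + dotv (y - y0) (gradh y0).

Lemma auglag_xstep LA gam x0 x1 y0 :
  lipschitz_differentiable g gradg Lg ->
  (forall d, dotv (A *m d) (A *m d) <= LA * dotv d d) ->
  0 <= beta -> Lg + beta * LA <= Lx ->
  xobj gam x0 y0 x1 <= xobj gam x0 y0 x0 ->
  auglag x1 y0 gam <= auglag x0 y0 gam.
Proof.
move=> Hg HA beta0 HLx; rewrite /xobj /auglag subrr !dotv0l mulr0 !addr0.
have [dx ->] : exists dx, x1 = x0 + dx by exists (x1 - x0); rewrite addrC subrK.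
have -> : x0 + dx - x0 = dx by rewrite addrC addKr.
set r0 := A *m x0 + B *m y0.
have -> : A *m (x0 + dx) + B *m y0 = r0 + A *m dx by rewrite mulmxDr addrAC.
rewrite (dotvDr (gradg x0)) dotvZr (dotv_mulmx A^T) trmxK dotvvD.
rewrite (dotvC dx (gradg x0)) (dotvC (A *m dx) r0) !mulmxDr !dotvDr.
have := descent_lemma Hg x0 dx; have := ler_wpM2l beta0 (HA dx); have := dotvv_ge0 dx.
have : (Lg + beta * LA) * dotv dx dx <= Lx * dotv dx dx by rewrite ler_wpM2r ?dotvv_ge0.
nra.
Qed.

Lemma yobj_expand gam x1 y0 y1 e : yobj gam x1 y0 (y1 + e) = yobj gam x1 y0 y1
  + dotv (B^T *m (gam + beta *: (A *m x1 + B *m y1)) + Ly *: (y1 - y0) + gradh y0) e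
  + (Ly / 2 * dotv e e + beta / 2 * dotv (B *m e) (B *m e)).
Proof.
rewrite /yobj (addrAC y1) mulmxDr addrA !dotvDl -dotv_mulmx.
rewrite !dotvDl !dotvDr !dotvZl !dotvDl !dotvNl !dotvNr.
rewrite (dotvC (gradh y0)) (dotvC e y1) (dotvC e y0) (dotvC y0 y1).
by rewrite (dotvC (B *m e)) (dotvC (B *m e) (B *m y1)) (dotvC (B *m y1)); field.
Qed.

Lemma yobj_min_stationary gam x1 y0 y1 :
  (forall y, yobj gam x1 y0 y1 <= yobj gam x1 y0 y) ->
  B^T *m (gam + beta *: (A *m x1 + B *m y1)) = - gradh y0 - Ly *: (y1 - y0).
Proof.
move=> y1_min; apply/eqP; rewrite -subr_eq0 opprB opprK addrA; apply/eqP.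
apply: min_quadratic_stationary (yobj_expand gam x1 y0 y1) _ y1_min.
by move=> s e; rewrite -scalemxAr !dotvZl !dotvZr; ring.
Qed.

Lemma auglag_ystep lam gam x1 y0 y1 :
  lipschitz_differentiable h gradh Lh ->
  (forall d, lam * dotv d d <= dotv (B *m d) (B *m d)) -> 0 <= beta ->
  (forall y, yobj gam x1 y0 y1 <= yobj gam x1 y0 y) ->
  auglag x1 y1 gam <=
    auglag x1 y0 gam - (Ly - Lh / 2 + beta * lam / 2) * dotv (y1 - y0) (y1 - y0).
Proof.
move=> Hh HB beta0 y1_min.
have G0 : B^T *m (gam + beta *: (A *m x1 + B *m y1)) + Ly *: (y1 - y0) + gradh y0 = 0.
  by rewrite (yobj_min_stationary y1_min) subrK addNr.
have := yobj_expand gam x1 y0 y1 (y0 - y1).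
rewrite G0 dotv0l addr0 (addrC y1) subrK -(opprB y1 y0) mulmxN !dotvvN.
have := descent_lemma Hh y0 (y1 - y0); rewrite (addrC y0) subrK (dotvC (gradh y0)).
have := ler_wpM2l beta0 (HB (y1 - y0)).
rewrite /yobj /auglag subrr !dotv0l mulr0 !addr0 !(dotvDr _ _ gam).
nra.
Qed.

Lemma auglag_dual_update x y gam :
  auglag x y (gam + beta *: (A *m x + B *m y))
  = auglag x y gam + beta * dotv (A *m x + B *m y) (A *m x + B *m y).
Proof. by rewrite /auglag dotvDl dotvZl; ring. Qed.

Lemma auglag_ge_feasible lam gam x y y0 U :
  lipschitz_differentiable h gradh Lh -> 0 <= Lh -> Lh <= Ly -> 0 < Ly ->
  (forall d, lam * dotv d d <= dotv (B *m d) (B *m d)) -> 0 <= beta ->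
  2 * Ly ^+ 2 + Lh <= beta * lam ->
  B^T *m gam = - gradh y0 - Ly *: (y - y0) -> A *m x + B *m y = B *m U ->
  g x + f x + h (y - U) - dotv (y - y0) (y - y0) <= auglag x y gam.
Proof.
move=> Hh Lh0 LhLy Ly0 HB beta0 Hbeta foc Hr.
set D := dotv (y - y0) (y - y0); have D0 : 0 <= D := dotvv_ge0 _.
have LhLy2 : Lh ^+ 2 <= Ly ^+ 2 by rewrite ler_sqr ?nnegrE //; lra.
pose V := gradh y - gradh y0 - Ly *: (y - y0).
have HV : dotv V V <= 4 * Ly ^+ 2 * D.
  have := dotvvD_le (gradh y - gradh y0) (- (Ly *: (y - y0))).
  rewrite dotvvN !dotvZl !dotvZr -/V -/D.
  have := lipschitz_sqr y y0 Hh; rewrite -/D.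
  nra.
have HUV : dotv U (- V) <= Ly ^+ 2 * dotv U U + D.
  have := dotv_amgm (2 * Ly ^+ 2) U (- V); rewrite dotvvN => H.
  have Ly8 : 0 < 8 * Ly ^+ 2 by nra.
  rewrite -(ler_pM2l Ly8); have := dotvv_ge0 U; nra.
have := descent_lemma Hh y (- U); rewrite dotvvN dotvNr.
have := ler_wpM2l beta0 (HB U); have := dotvv_ge0 U.
have EUV : dotv U (- V) = - dotv (gradh y) U + dotv (gradh y0) U + Ly * dotv (y - y0) U.
  by rewrite dotvNr /V !dotvBr dotvZr !(dotvC U); ring.
rewrite EUV in HUV.
rewrite /auglag Hr (dotv_mulmx B gam) foc dotvBl dotvNl dotvZl.
nra.
Qed.

End LinearizedADMMSteps.

Definition bounded_seq (R : realType) m (v : nat -> 'cV[R]_m) :=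
  exists M, forall k, dotv (v k) (v k) <= M.

Section BoundedSequences.
Variables (R : realType) (m : nat).
Implicit Types (v w : nat -> 'cV[R]_m).

Lemma bounded_seqS v : bounded_seq (fun k => v k.+1) -> bounded_seq v.
Proof.
move=> [M HM]; exists (Num.max M (dotv (v 0%N) (v 0%N))) => -[|k].
  by rewrite le_max lexx orbT.
by rewrite le_max HM.
Qed.

Lemma bounded_seq_tail v : bounded_seq v -> bounded_seq (fun k => v k.+1).
Proof. by move=> [M HM]; exists M. Qed.

Lemma bounded_seq_cst (c : 'cV[R]_m) : bounded_seq (fun => c).
Proof. by exists (dotv c c). Qed.

Lemma bounded_seqD v w : bounded_seq v -> bounded_seq w ->
  bounded_seq (fun k => v k + w k).
Proof.
move=> [Mv Hv] [Mw Hw]; exists (2 * Mv + 2 * Mw) => k.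
by apply: le_trans (dotvvD_le _ _) _; have := Hv k; have := Hw k; lra.
Qed.

Lemma bounded_seqN v : bounded_seq v -> bounded_seq (fun k => - v k).
Proof. by move=> [M HM]; exists M => k; rewrite dotvvN. Qed.

Lemma bounded_seq_lipschitz (F : 'cV[R]_m -> R) gF L v :
  lipschitz_differentiable F gF L -> bounded_seq v -> bounded_seq (fun k => gF (v k)).
Proof.
move=> HF [M HM].
exists (2 * (L ^+ 2 * M) + 2 * dotv (gF 0) (gF 0)) => k.
rewrite -[gF (v k)](subrK (gF 0)); apply: le_trans (dotvvD_le _ _) _.
have := lipschitz_sqr (v k) 0 HF; rewrite subr0.
have := ler_wpM2l (sqr_ge0 L) (HM k); lra.
Qed.

Lemma bounded_seq_scaled m' c v (w : nat -> 'cV[R]_m') : 0 < c ->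
  (forall k, c * dotv (v k) (v k) <= dotv (w k) (w k)) ->
  bounded_seq w -> bounded_seq v.
Proof.
move=> c0 Hvw [M HM]; exists (M / c) => k.
by rewrite ler_pdivlMr // mulrC; apply: le_trans (Hvw k) (HM k).
Qed.

Lemma bounded_seq_normv v : bounded_seq v -> exists M, forall k, normv (v k) <= M.
Proof. by move=> [M HM]; exists (Num.sqrt M) => k; apply: ler_wsqrtr. Qed.

End BoundedSequences.

Lemma bounded_of_coercive (R : realType) (X Y : Type) (P : X -> Y -> Prop)
    (F : X -> Y -> R) (N : Y -> R) :
  (forall (xs : nat -> X) (ys : nat -> Y), (forall k, P (xs k) (ys k)) ->
    (forall M, exists K, forall k, (K <= k)%N -> M <= N (ys k)) ->
    forall M, exists K, forall k, (K <= k)%N -> M <= F (xs k) (ys k)) ->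
  forall (xs : nat -> X) (ys : nat -> Y) C, (forall k, P (xs k) (ys k)) ->
  (forall k, F (xs k) (ys k) <= C) -> exists M, forall k, N (ys k) <= M.
Proof.
move=> Hcoer xs ys C HP HC; apply: contrapT => unbounded.
have Hj (j : nat) : exists k, j%:R < N (ys k).
  apply: contrapT => Hk; apply: unbounded; exists j%:R => k.
  by rewrite leNgt; apply/negP => Hlt; apply: Hk; exists k.
have [sub Hsub] := choice Hj.
have Nsub M : exists K, forall k, (K <= k)%N -> M <= N (ys (sub k)).
  exists (Num.Def.archi_bound `|M|) => k Kk.
  have := archi_boundP (normr_ge0 M); have := Hsub k; have := ler_norm M.
  have : (Num.Def.archi_bound `|M|)%:R <= k%:R :> R by rewrite ler_nat.
  lra.
have [K HK] := Hcoer (xs \o sub) (ys \o sub) (fun k => HP (sub k)) Nsub (C + 1).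
by have := HK K (leqnn K); have := HC (sub K); rewrite /=; lra.
Qed.

Section LinearizedADMMIterates.
Variables (R : realType) (p q n : nat) (A : 'M[R]_(n, p)) (B : 'M[R]_(n, q)).
Variables (f g : 'cV[R]_p -> R) (h : 'cV[R]_q -> R).
Variables (gradg : 'cV[R]_p -> 'cV[R]_p) (gradh : 'cV[R]_q -> 'cV[R]_q).
Variables (Lg Lh LA lamB Lx Ly beta lb : R).
Variables (xs : nat -> 'cV[R]_p) (ys : nat -> 'cV[R]_q) (gam : nat -> 'cV[R]_n).
Variable z : 'cV[R]_p -> 'cV[R]_q.

Hypothesis Hg : lipschitz_differentiable g gradg Lg.
Hypothesis Hh : lipschitz_differentiable h gradh Lh.
Hypothesis HA : forall d, dotv (A *m d) (A *m d) <= LA * dotv d d.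
Hypothesis HB : forall d, lamB * dotv d d <= dotv (B *m d) (B *m d).
Hypothesis lamB_gt0 : 0 < lamB.
Hypothesis beta_gt0 : 0 < beta.
Hypothesis Lh_ge0 : 0 <= Lh.
Hypothesis Lh_le_Ly : Lh <= Ly.
Hypothesis Ly_ge3 : 3 <= Ly.
Hypothesis Lx_ge : Lg + beta * LA <= Lx.
Hypothesis beta_lamB_ge : 3 * Ly ^+ 2 <= beta * lamB.
Hypothesis Hx : forall k,
  xobj A B f gradg Lx beta (gam k) (xs k) (ys k) (xs k.+1)
  <= xobj A B f gradg Lx beta (gam k) (xs k) (ys k) (xs k).
Hypothesis Hy : forall k y,
  yobj A B gradh Ly beta (gam k) (xs k.+1) (ys k) (ys k.+1)
  <= yobj A B gradh Ly beta (gam k) (xs k.+1) (ys k) y.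
Hypothesis Hgam : forall k, gam k.+1 = gam k + beta *: (A *m xs k.+1 + B *m ys k.+1).
Hypothesis Hz : forall x, A *m x = B *m z x.
Hypothesis Hlb : forall x y, A *m x + B *m y = 0 -> lb <= g x + f x + h y.
Hypothesis Hcoer : forall (xs : nat -> 'cV[R]_p) (ys : nat -> 'cV[R]_q),
  (forall k, A *m xs k + B *m ys k = 0) ->
  (forall M, exists N, forall k, (N <= k)%N -> M <= normv (ys k)) ->
  forall M, exists N, forall k, (N <= k)%N -> M <= g (xs k) + f (xs k) + h (ys k).

Let r k := A *m xs k + B *m ys k.
Let u k := z (xs k) + ys k.
Let D k := dotv (ys k.+1 - ys k) (ys k.+1 - ys k).
Let lag k := auglag A B f g h beta (xs k) (ys k) (gam k).
Let lyap k := lag k.+1 + 2 * D k.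

Let D_ge0 k : 0 <= D k. Proof. exact: dotvv_ge0. Qed.
Let Ly_gt0 : 0 < Ly. Proof. exact: lt_le_trans Ly_ge3. Qed.
Let Lh_sqr_le : Lh ^+ 2 <= Ly ^+ 2.
Proof. by rewrite ler_sqr ?nnegrE ?Lh_le_Ly // ltW. Qed.
Let betalamB_gt0 : 0 < beta * lamB. Proof. exact: mulr_gt0. Qed.

Lemma resid_range k : r k = B *m u k.
Proof. by rewrite /r /u mulmxDr Hz. Qed.

Lemma feasible_z x : A *m x + B *m (- z x) = 0.
Proof. by rewrite mulmxN Hz subrr. Qed.

Lemma stationary_y k : B^T *m gam k.+1 = - gradh (ys k) - Ly *: (ys k.+1 - ys k).
Proof. by rewrite Hgam; apply: yobj_min_stationary; apply: Hy. Qed.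

Lemma lag_step k :
  lag k.+1 <= lag k - (Ly - Lh / 2 + beta * lamB / 2) * D k
              + beta * dotv (r k.+1) (r k.+1).
Proof.
have := auglag_xstep h Hg HA (ltW beta_gt0) Lx_ge (Hx k).
have := auglag_ystep f g Hh HB (ltW beta_gt0) (Hy k).
by rewrite /lag /D /r Hgam auglag_dual_update; lra.
Qed.

Lemma dual_residual_le k : beta * dotv (r k.+2) (r k.+2) <= D k.+1 + 2 * D k.
Proof.
have Egam : gam k.+2 - gam k.+1 = beta *: r k.+2 by rewrite Hgam addrC addKr.
have HBr := gram_range_ge (ltW lamB_gt0) HB (beta *: u k.+2).
have EBu : B *m (beta *: u k.+2) = gam k.+2 - gam k.+1.
  by rewrite -scalemxAr -resid_range Egam.
rewrite EBu mulmxBr !stationary_y Egam !dotvZl !dotvZr in HBr.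
have EX a b c d : (- a - b) - (- c - d) = - (a - c) + - b + d :> 'cV[R]_q.
  by apply/matrixP => i j; rewrite !mxE; ring.
rewrite EX in HBr.
have H3 := dotvvD3_le (- (gradh (ys k.+1) - gradh (ys k)))
  (- (Ly *: (ys k.+2 - ys k.+1))) (Ly *: (ys k.+1 - ys k)).
rewrite !dotvvN !dotvZl !dotvZr -/(D k) -/(D k.+1) in H3.
have HL := lipschitz_sqr (ys k.+1) (ys k) Hh; rewrite -/(D k) in HL.
rewrite -(ler_pM2l betalamB_gt0).
have := D_ge0 k; have := D_ge0 k.+1; move: HBr H3 HL Lh_sqr_le beta_lamB_ge.
nra.
Qed.

Lemma lyap_nonincr k : lyap k.+1 <= lyap k.
Proof.
have := lag_step k.+1; have := dual_residual_le k; have := D_ge0 k.+1.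
have : 3 <= Ly - Lh / 2 + beta * lamB / 2.
  by move: Lh_le_Ly Ly_ge3 beta_lamB_ge; nra.
by rewrite /lyap; nra.
Qed.

Lemma lyap_le k : lyap k <= lyap 0.
Proof.
elim: k => [|k IHk]; first exact: lexx.
exact: le_trans (lyap_nonincr k) IHk.
Qed.

Lemma obj_le_lyap k :
  g (xs k.+1) + f (xs k.+1) + h (- z (xs k.+1)) + D k <= lyap k.
Proof.
have Hbeta : 2 * Ly ^+ 2 + Lh <= beta * lamB.
  by move: Lh_le_Ly Ly_ge3 beta_lamB_ge; nra.
have := auglag_ge_feasible f g Hh Lh_ge0 Lh_le_Ly Ly_gt0 HB (ltW beta_gt0) Hbeta
  (stationary_y k) (resid_range k.+1).
have -> : ys k.+1 - u k.+1 = - z (xs k.+1) by rewrite /u opprD addrCA subrr addr0.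
by rewrite /lyap /lag -/(D k); lra.
Qed.

Lemma D_le k : D k <= lyap 0 - lb.
Proof.
have := obj_le_lyap k; have := lyap_le k; have := Hlb (feasible_z (xs k.+1)); lra.
Qed.

Lemma obj_le k : g (xs k.+1) + f (xs k.+1) + h (- z (xs k.+1)) <= lyap 0.
Proof. by have := obj_le_lyap k; have := lyap_le k; have := D_ge0 k; lra. Qed.

Lemma feasible_y_bounded : bounded_seq (fun k => - z (xs k.+1)).
Proof.
have [M HM] := bounded_of_coercive (P := fun x y => A *m x + B *m y = 0)
  (F := fun x y => g x + f x + h y) (N := @normv R q) Hcoer
  (fun k => feasible_z (xs k.+1)) obj_le.
exists (M ^+ 2) => k; rewrite -normv_sqr ler_sqr ?nnegrE ?HM ?normv_ge0 //.
exact: le_trans (normv_ge0 _) (HM k).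
Qed.

Lemma u_bounded : bounded_seq (fun k => u k.+2).
Proof.
exists (3 * (lyap 0 - lb) / (beta * lamB)) => k; rewrite ler_pdivlMr //.
have := ler_wpM2l (ltW beta_gt0) (HB (u k.+2)); rewrite -resid_range.
have := dual_residual_le k; have := D_le k; have := D_le k.+1; nra.
Qed.

Lemma ys_bounded : bounded_seq ys.
Proof.
apply/bounded_seqS/bounded_seqS.
have -> : (fun k => ys k.+2) = (fun k => u k.+2 + - z (xs k.+2)).
  by apply: funext => k; rewrite /u addrAC subrr add0r.
exact: bounded_seqD u_bounded (bounded_seq_tail feasible_y_bounded).
Qed.

Lemma trmx_gam_bounded : bounded_seq (fun k => B^T *m gam k).
Proof.
apply: bounded_seqS.
have -> : (fun k => B^T *m gam k.+1)
    = (fun k => - gradh (ys k) + - (Ly *: (ys k.+1 - ys k))).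
  by apply: funext => k; rewrite stationary_y.
apply: bounded_seqD; first exact/bounded_seqN/(bounded_seq_lipschitz Hh ys_bounded).
apply: bounded_seqN; exists (Ly ^+ 2 * (lyap 0 - lb)) => k.
by rewrite dotvZl dotvZr mulrA -expr2 ler_wpM2l ?sqr_ge0 ?D_le.
Qed.

Lemma gam_range k : exists U, gam k - gam 0%N = B *m U.
Proof.
elim: k => [|k [U HU]]; first by exists 0; rewrite subrr mulmx0.
exists (U + beta *: u k.+1).
by rewrite mulmxDr -HU -scalemxAr -resid_range Hgam addrAC.
Qed.

Lemma gam_bounded : bounded_seq gam.
Proof.
have [U HU] := choice gam_range.
have : bounded_seq (fun k => gam k - gam 0%N).
  apply: (bounded_seq_scaled (w := fun k => B^T *m gam k - B^T *m gam 0%N) lamB_gt0).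
    by move=> k; rewrite -mulmxBr HU; apply: gram_range_ge (ltW lamB_gt0) HB (U k).
  exact: bounded_seqD trmx_gam_bounded (bounded_seqN (bounded_seq_cst _)).
move=> /bounded_seqD /(_ (bounded_seq_cst (gam 0%N))).
by under eq_fun do rewrite subrK.
Qed.

End LinearizedADMMIterates.

Theorem corollary1 (R : realType) (p q n : nat)
  (A : 'M[R]_(n, p)) (B : 'M[R]_(n, q))
  (f g : 'cV[R]_p -> R) (h : 'cV[R]_q -> R)
  (gradg : 'cV[R]_p -> 'cV[R]_p) (gradh : 'cV[R]_q -> 'cV[R]_q)
  (Lg Lh LA lamB Lx Ly beta : R)
  (* (i), (ii) *)
  (Hh : lipschitz_differentiable h gradh Lh)
  (Hg : lipschitz_differentiable g gradg Lg)
  (* (iii) lower bounded and coercive in y on the feasible set *)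
  (Hlb : exists m : R, forall x y, A *m x + B *m y = 0 -> m <= g x + f x + h y)
  (Hcoer : forall (xs : nat -> 'cV[R]_p) (ys : nat -> 'cV[R]_q),
      (forall k, A *m xs k + B *m ys k = 0) ->
      (forall M : R, exists N, forall k, (N <= k)%N -> M <= normv (ys k)) ->
      forall M : R, exists N, forall k, (N <= k)%N ->
        M <= g (xs k) + f (xs k) + h (ys k))
  (* (iv) *)
  (HBrank : \rank B = q)
  (HIm : forall x : 'cV[R]_p, exists y : 'cV[R]_q, A *m x = B *m y)
  (* spectral constants *)
  (HLA : largest_eigenvalue (A^T *m A) LA)
  (HlamB : smallest_eigenvalue (B^T *m B) lamB)
  (* parameters *)
  (HLx0 : 0 < Lx) (HLy0 : 0 < Ly) (Hbeta0 : 0 < beta)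
  (HLx : Lx >= Lg + beta * LA + 6 * (Lg + Lh) ^+ 2 + 1)
  (HLy : Ly >= (Lg + Lh) + (Lg + Lh) ^+ 2 + 3)
  (Hbeta1 : beta >= ((Lg + Lh) + Ly + 2) / lamB)
  (Hbeta2 : beta >= 3 * ((Lg + Lh) ^+ 2 + Ly ^+ 2)
                      / (lamB * ((Ly + (Lg + Lh) ^+ 2) / 2)))
  (Hbeta3 : beta >= 3 * Ly ^+ 2 / lamB)
  (* the iterates of the two-block linearized ADMM (arbitrary initialization) *)
  (xs : nat -> 'cV[R]_p) (ys : nat -> 'cV[R]_q) (gam : nat -> 'cV[R]_n)
  (Hx : forall k (x : 'cV[R]_p),
      let fbar := fun x => f x + dotv (gam k) (A *m x)
        + Lx / 2 * dotv (x - xs k) (x - xs k)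
        + dotv (x - xs k) (gradg (xs k) + beta *: (A^T *m (A *m xs k + B *m ys k))) in
      fbar (xs k.+1) <= fbar x)
  (Hy : forall k (y : 'cV[R]_q),
      let hbar := fun y => dotv (gam k) (B *m y)
        + Ly / 2 * dotv (y - ys k) (y - ys k)
        + beta / 2 * dotv (A *m xs k.+1 + B *m y) (A *m xs k.+1 + B *m y)
        + dotv (y - ys k) (gradh (ys k)) in
      hbar (ys k.+1) <= hbar y)
  (Hgam : forall k, gam k.+1 = gam k + beta *: (A *m xs k.+1 + B *m ys k.+1)) :
  exists M : R, forall k, normv (gam k) <= M.
Proof.
have [dA _ dA0] := sym_eigenvector (gram_sym A) HLA.1.
have [dB _ dB0] := sym_eigenvector (gram_sym B) HlamB.1.
have Lg0 := lipschitz_differentiable_ge0 dA0 Hg.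
have Lh0 := lipschitz_differentiable_ge0 dB0 Hh.
have lamB0 := smallest_eigenvalue_gram_gt0 HBrank HlamB.
have [z Hz] := choice HIm.
have [lb Hlb'] := Hlb.
have Lw2 := sqr_ge0 (Lg + Lh).
apply/bounded_seq_normv/(gam_bounded Hg Hh (largest_eigenvalue_gram HLA)
  (smallest_eigenvalue_gram HlamB) lamB0 Hbeta0 Lh0 _ _ _ _ (fun k => Hx k (xs k))
  Hy Hgam Hz Hlb' Hcoer); try lra.
by rewrite -ler_pdivrMr.
Qed.
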